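(* For the 0-1-loss $\ell_{0\text{-}1}(\mathrm{h},(x,y))=1-\mathrm{h}(y|x)$ and training instances $x_1,\dots,x_n$, the problem $\mathscr{P}_{x,\ell_{0\text{-}1}}^{\mathbf{a},\mathbf{b}}$ is equivalent to $$\mathscr{P}_{x,0\text{-}1}^{\mathbf{a},\mathbf{b}}:\ \min_{\boldsymbol{\mu},\boldsymbol{\eta}}\ \tfrac{1}{2}(\mathbf{b}-\mathbf{a})^{\mathrm{T}}\boldsymbol{\eta}-\tfrac{1}{2}(\mathbf{b}+\mathbf{a})^{\mathrm{T}}\boldsymbol{\mu}-\frac{1}{n}\sum_{i=1}^n\varphi_{0\text{-}1}(\boldsymbol{\mu},x_i)\ \text{ s.t. }\boldsymbol{\eta}+\boldsymbol{\mu}\succeq\mathbf{0},\ \boldsymbol{\eta}-\boldsymbol{\mu}\succeq\mathbf{0},$$ with $$\varphi_{0\text{-}1}(\boldsymbol{\mu},x)=\min_{\mathcal{C}\subseteq\mathcal{Y},\mathcal{C}\neq\emptyset}\frac{1-\sum_{y\in\mathcal{C}}\big(\Phi(x,y)^{\mathrm{T}}\boldsymbol{\mu}+1\big)}{|\mathcal{C}|}.$$ In addition, for a solution $\boldsymbol{\mu}^*,\boldsymbol{\eta}^*$ of $\mathscr{P}_{x,0\text{-}1}^{\mathbf{a},\mathbf{b}}$, the condition $\ell_{0\text{-}1}(\mathrm{h},(x,y))+\Phi(x,y)^{\mathrm{T}}\boldsymbol{\mu}^*+\varphi_{\ell_{0\text{-}1}}(\boldsymbol{\mu}^*,x)\leq0$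 for all $x,y$ (which makes $\mathrm{h}$ a 0-1-MRC for $\mathcal{U}_x^{\mathbf{a},\mathbf{b}}$) becomes $$\mathrm{h}(y|x)\geq \Phi(x,y)^{\mathrm{T}}\boldsymbol{\mu}^*+1+\varphi_{0\text{-}1}(\boldsymbol{\mu}^*,x)\quad\forall x\in\mathcal{X},y\in\mathcal{Y}.$$
   Context: Let $\mathcal{X},\mathcal{Y}$ be finite nonempty sets, $\mathcal{Y}=\{1,\dots,|\mathcal{Y}|\}$; $\Delta(\mathcal{Z})$ the probability distributions on a finite set $\mathcal{Z}$. A classification rule $\mathrm{h}$ assigns to each $x$ a distribution $\mathrm{h}(\cdot|x)\in\Delta(\mathcal{Y})$. For a score function $L$ (loss $\ell(\mathrm{h},(x,y))=L(\mathrm{h}(\cdot|x),y)$): $\Phi:\mathcal{X}\times\mathcal{Y}\to\mathbb{R}^m$ is a feature mapping, $\boldsymbol{\Phi}(x,\cdot)$ the $|\mathcal{Y}|\times m$ matrix with rows $\Phi(x,y)^{\mathrm{T}}$, $\mathbf{1}$ the all-ones vector, $\preceq,\succeq$ componentwise, $\mathcal{L}=\{\mathbf{c}\in\mathbb{R}^{|\mathcal{Y}|}:\exists\,\mathrm{q}\in\Delta(\mathcal{Y}),\ \mathbf{c}+(L(\mathrm{q},y))_{y}\preceq\mathbf{0}\}$, $\varphi_\ell(\boldsymbol{\mu},x)=\max\{\nu:\boldsymbol{\Phi}(x,\cdot)\boldsymbol{\mu}+\nu\mathbf{1}\in\mathcal{L}\}$, and $\mathscr{P}_{x,\ell}^{\mathbf{a},\mathbf{b}}$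 is $\min_{\boldsymbol{\mu},\boldsymbol{\eta}}\tfrac12(\mathbf{b}-\mathbf{a})^{\mathrm{T}}\boldsymbol{\eta}-\tfrac12(\mathbf{b}+\mathbf{a})^{\mathrm{T}}\boldsymbol{\mu}-\frac1n\sum_{i=1}^n\varphi_\ell(\boldsymbol{\mu},x_i)$ s.t. $\boldsymbol{\eta}\pm\boldsymbol{\mu}\succeq\mathbf{0}$. With $\mathrm{p}_n$ the empirical distribution of $x_1,\dots,x_n$, $\mathcal{U}_x^{\mathbf{a},\mathbf{b}}=\{\mathrm{p}\in\Delta(\mathcal{X}\times\mathcal{Y}):\mathbf{a}\preceq\mathbb{E}_{\mathrm{p}}\{\Phi\}\preceq\mathbf{b},\ \sum_y\mathrm{p}(x,y)=\mathrm{p}_n(x)\ \forall x\}$, and an $\ell$-MRC for $\mathcal{U}$ minimizes $\max_{\mathrm{p}\in\mathcal{U}}\sum_{x,y}\mathrm{p}(x,y)\ell(\mathrm{h},(x,y))$ over all classification rules. *)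

From HB Require Import structures.
From mathcomp Require Import all_boot all_order all_algebra.
From mathcomp Require Import all_classical all_reals.
Set Implicit Arguments. Unset Strict Implicit. Unset Printing Implicit Defensive.
Import Order.TTheory GRing.Theory Num.Theory.
Local Open Scope ring_scope.
Local Open Scope classical_set_scope.

Section Defs.
Variable R : realType.

Definition dot (m : nat) (u v : 'I_m -> R) : R := \sum_(i < m) u i * v i.

Definition is_distr (Z : finType) (q : Z -> R) : Prop :=
  (forall z, 0 <= q z) /\ \sum_(z : Z) q z = 1.

Definition is_rule (X Y : finType) (h : X -> Y -> R) : Prop :=
  forall x, is_distr (h x).

(* 0-1 score function L(q,y) = 1 - q(y), so that l(h,(x,y)) = 1 - h(y|x) *)
Definition L01 (Y : finType) (q : Y -> R) (y : Y) : R := 1 - q y.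

Definition calL (Y : finType) (L : (Y -> R) -> Y -> R) : set (Y -> R) :=
  [set c | exists q : Y -> R, is_distr q /\ forall y, c y + L q y <= 0].

(* phi_l(mu,x) = max { nu | Phi(x,.) mu + nu 1 in cal_L } (taken as sup) *)
Definition phi_l (X Y : finType) (m : nat) (L : (Y -> R) -> Y -> R)
  (Phi : X -> Y -> 'I_m -> R) (mu : 'I_m -> R) (x : X) : R :=
  sup [set nu : R | calL L (fun y => dot (Phi x y) mu + nu)].

Definition phi01_term (X Y : finType) (m : nat) (Phi : X -> Y -> 'I_m -> R)
  (mu : 'I_m -> R) (x : X) (C : {set Y}) : R :=
  (1 - \sum_(y in C) (dot (Phi x y) mu + 1)) / #|C|%:R.

Definition phi01 (X Y : finType) (m : nat) (Phi : X -> Y -> 'I_m -> R)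
  (mu : 'I_m -> R) (x : X) : R :=
  \big[Num.min/phi01_term Phi mu x [set: Y]]_(C : {set Y} | (0 < #|C|)%N)
     phi01_term Phi mu x C.

Definition objective (X : finType) (m n : nat) (a b : 'I_m -> R)
  (phi : ('I_m -> R) -> X -> R) (xs : 'I_n -> X)
  (mu eta : 'I_m -> R) : R :=
  2^-1 * dot (fun i => b i - a i) eta - 2^-1 * dot (fun i => b i + a i) mu
  - n%:R^-1 * \sum_(i < n) phi mu (xs i).

Definition feasible (m : nat) (mu eta : 'I_m -> R) : Prop :=
  forall i, 0 <= eta i + mu i /\ 0 <= eta i - mu i.

End Defs.

(** For the 0-1 score, a vector [c] can be pushed below [0] by [-L(q, .)]
    exactly when [c + 1] has total mass at most [1] on every subset of [Y]:
    necessity because [q] has mass at most [1] on every subset, sufficiency by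
    taking [q] to be the positive part of [c + 1] topped up uniformly to a
    distribution. Applied to [c = Phi(x,.)^T mu + nu], the subset conditions
    say precisely that [nu] lies below every term of the minimum defining
    [phi01], so the set whose supremum is [phi_l] is the half-line
    [(-oo, phi01]]. *)

From HB Require Import structures.
From mathcomp Require Import all_boot all_order all_algebra.
From mathcomp Require Import all_classical all_reals.
From mathcomp Require Import lra.

Set Implicit Arguments.
Unset Strict Implicit.
Unset Printing Implicit Defensive.
Import Order.TTheory GRing.Theory Num.Theory.
Local Open Scope ring_scope.
Local Open Scope classical_set_scope.

Section PositivePart.
Variables (R : realDomainType) (I : finType).

Lemma sumr_max0 (f : I -> R) :
  \sum_i Num.max (f i) 0 = \sum_(i in [set i | 0 < f i]%SET) f i.
Proof.
rewrite (bigID (mem [set i | 0 < f i]%SET)) /= [X in _ + X]big1 ?addr0.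
  by apply: eq_bigr => i; rewrite inE => /ltW f_ge0; rewrite max_l.
by move=> i; rewrite inE -leNgt => f_le0; rewrite max_r.
Qed.

End PositivePart.

Section ZeroOneScore.
Variables (R : realType) (Y : finType).

Lemma sum_distr_le1 (C : {set Y}) (q : Y -> R) :
  is_distr q -> \sum_(y in C) q y <= 1.
Proof.
move=> [q_ge0 <-]; rewrite [X in _ <= X](bigID (mem C)) /= lerDl.
exact: sumr_ge0.
Qed.

Lemma distr_ge_subdistr (p : Y -> R) : (0 < #|Y|)%N ->
  (forall y, 0 <= p y) -> \sum_y p y <= 1 ->
  exists2 q, is_distr q & forall y, p y <= q y.
Proof.
move=> Y_gt0 p_ge0 sum_p_le1.
pose slack := (1 - \sum_y p y) / #|Y|%:R.
have slack_ge0 : 0 <= slack by rewrite divr_ge0 ?subr_ge0.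
exists (fun y => p y + slack); last by move=> y; rewrite lerDl.
split; first by move=> y; rewrite addr_ge0.
rewrite big_split /= sumr_const -mulr_natr divfK ?pnatr_eq0 -?lt0n //.
by rewrite addrC subrK.
Qed.

Lemma calL01E (c : Y -> R) : (0 < #|Y|)%N ->
  calL (@L01 R Y) c <-> forall C : {set Y}, \sum_(y in C) (c y + 1) <= 1.
Proof.
move=> Y_gt0; split.
  move=> [q [q_distr c_le]] C; apply: (le_trans _ (sum_distr_le1 C q_distr)).
  by apply: ler_sum => y _; have := c_le y; rewrite /L01; lra.
move=> sum_le1; pose p y := Num.max (c y + 1) 0.
have p_ge0 y : 0 <= p y by rewrite le_max lexx orbT.
have sum_p_le1 : \sum_y p y <= 1 by rewrite sumr_max0.
have [q q_distr p_le_q] := distr_ge_subdistr Y_gt0 p_ge0 sum_p_le1.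
exists q; split => // y; have c_le_p : c y + 1 <= p y by rewrite le_max lexx.
by have := p_le_q y; rewrite /L01; lra.
Qed.

End ZeroOneScore.

Section Phi01.
Variables (R : realType) (X Y : finType) (m : nat).
Variables (Phi : X -> Y -> 'I_m -> R) (mu : 'I_m -> R) (x : X).
Hypothesis Y_gt0 : (0 < #|Y|)%N.

Lemma le_phi01_term (nu : R) (C : {set Y}) : (0 < #|C|)%N ->
  (nu <= phi01_term Phi mu x C) = (\sum_(y in C) (dot (Phi x y) mu + nu + 1) <= 1).
Proof.
move=> C_gt0; rewrite /phi01_term ler_pdivlMr ?ltr0n //.
have -> : \sum_(y in C) (dot (Phi x y) mu + nu + 1)
          = \sum_(y in C) (dot (Phi x y) mu + 1) + nu * #|C|%:R.
  by rewrite mulr_natr -sumr_const -big_split; apply: eq_bigr => y _; rewrite addrAC.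
apply/idP/idP; lra.
Qed.

Lemma le_phi01 (nu : R) : nu <= phi01 Phi mu x <->
  forall C : {set Y}, \sum_(y in C) (dot (Phi x y) mu + nu + 1) <= 1.
Proof.
split.
  move=> /bigmin_geP [_ le_terms] C; have [C0|C_gt0] := posnP #|C|.
    by move/eqP: C0; rewrite cards_eq0 => /eqP ->; rewrite big_set0 ler01.
  by rewrite -le_phi01_term // le_terms.
move=> sum_le1; apply/bigmin_geP; split.
  by rewrite le_phi01_term ?cardsT.
by move=> C C_gt0; rewrite le_phi01_term.
Qed.

Lemma calL01_shiftE (nu : R) :
  calL (@L01 R Y) (fun y => dot (Phi x y) mu + nu) <-> nu <= phi01 Phi mu x.
Proof. by rewrite calL01E // le_phi01. Qed.

Lemma phi_l_L01 : phi_l (@L01 R Y) Phi mu x = phi01 Phi mu x.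
Proof.
rewrite /phi_l.
have -> : [set nu | calL (@L01 R Y) (fun y => dot (Phi x y) mu + nu)]
          = `]-oo, phi01 Phi mu x]%classic.
  by rewrite set_itvNyc; apply/seteqP; split => nu /=; rewrite calL01_shiftE.
by rewrite sup_itv ?bnd_simp.
Qed.

End Phi01.

Theorem corollary7 (R : realType) (X Y : finType) (m n : nat)
  (hX : (0 < #|X|)%N) (hY : (0 < #|Y|)%N) (hn : (0 < n)%N)
  (Phi : X -> Y -> 'I_m -> R) (a b : 'I_m -> R) (xs : 'I_n -> X) :
  (* phi_{l_{0-1}} coincides with phi_{0-1}, and the max is attained *)
  (forall (mu : 'I_m -> R) (x : X),
      [set nu : R | calL (@L01 R Y) (fun y => dot (Phi x y) mu + nu)]
        (phi01 Phi mu x) /\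
      (forall nu : R, calL (@L01 R Y) (fun y => dot (Phi x y) mu + nu) ->
         nu <= phi01 Phi mu x) /\
      phi_l (@L01 R Y) Phi mu x = phi01 Phi mu x) /\
  (* hence P_{x,l_{0-1}} and P_{x,0-1} have the same objective and constraints *)
  (forall mu eta : 'I_m -> R,
      objective a b (phi_l (@L01 R Y) Phi) xs mu eta
      = objective a b (phi01 Phi) xs mu eta) /\
  (* MRC condition for a solution of P_{x,0-1} *)
  (forall (mu_s eta_s : 'I_m -> R),
      feasible mu_s eta_s ->
      (forall mu eta, feasible mu eta ->
         objective a b (phi01 Phi) xs mu_s eta_s
         <= objective a b (phi01 Phi) xs mu eta) ->
      forall h : X -> Y -> R, is_rule h ->
        ((forall x y, L01 (h x) y + dot (Phi x y) mu_s
                        + phi_l (@L01 R Y) Phi mu_s x <= 0)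
         <-> (forall x y, h x y >= dot (Phi x y) mu_s + 1 + phi01 Phi mu_s x))).
Proof.
have shiftE mu x nu := calL01_shiftE Phi mu x hY nu.
have phi_lE mu x := phi_l_L01 Phi mu x hY.
split.
  move=> mu x; split; first exact/shiftE.
  by split=> [nu /shiftE|]; last exact: phi_lE.
split.
  move=> mu eta; rewrite /objective; congr (_ - _ * _).
  by apply: eq_bigr => i _; rewrite phi_lE.
(* The MRC condition rewrites pointwise for any [mu_s]. *)
move=> mu_s eta_s _ _ h _.
by split=> mrc x y; have := mrc x y; rewrite phi_lE /L01; lra.
Qed.
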